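(* Let $\Sigma$ be a finite alphabet and $w\in\Sigma^\star$. If every symbol of $\Sigma$ occurs in $w$ more than $|\Sigma|$ times, then the answer to Disjoint Factors on $w$ is positive, i.e., there exist pairwise disjoint (contiguous) subwords $w_a$ of $w$, one for each $a\in\Sigma$, such that each $w_a$ has length at least $2$ and begins and ends with $a$. *)

From mathcomp Require Import all_boot.
Set Implicit Arguments. Unset Strict Implicit. Unset Printing Implicit Defensive.

(* A factor (contiguous subword) of w is encoded by its start and end
   positions [i, j] (0-based, inclusive): it is w_i w_{i+1} ... w_j. *)

Definition good_factor (T : eqType) (w : seq T) (a : T) (i j : nat) : Prop :=
  [/\ i < j, j < size w, nth a w i = a & nth a w j = a].

Definition disjoint_factors (T : finType) (w : seq T) : Prop :=
  exists s e : T -> nat,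
    (forall a, good_factor w a (s a) (e a)) /\
    (forall a b, a != b -> (e a < s b) \/ (e b < s a)).

From mathcomp Require Import all_boot.
From mathcomp Require Import zify.
Set Implicit Arguments. Unset Strict Implicit. Unset Printing Implicit Defensive.

(* Cut w just after the first position n at which some letter a of the
   alphabet repeats, say at an earlier position i.  The factor [i, n] serves a,
   and every other letter occurs at most once before n, so it loses at most
   one occurrence in the suffix after n.  Hence on the suffix every remaining
   letter still occurs more often than the number of remaining letters, and
   induction on the alphabet finishes the proof. *)

Definition disjoint_factors_on (T : eqType) (S : {pred T}) (w : seq T) : Prop :=
  exists s e : T -> nat,
    (forall a, a \in S -> good_factor w a (s a) (e a)) /\
    (forall a b, a \in S -> b \in S -> a != b -> (e a < s b) \/ (e b < s a)).

Lemma good_factor_drop (T : eqType) (w : seq T) (a : T) (k i j : nat) :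
  good_factor (drop k w) a i j -> good_factor w a (k + i) (k + j).
Proof.
case=> ij; rewrite size_drop !nth_drop => jw wi wj.
by split=> //; lia.
Qed.

Lemma disjoint_factors_on_factor_drop (T : eqType) (S S' : {pred T})
    (w : seq T) (a : T) (i n : nat) :
  good_factor w a i n -> {subset [predD1 S & a] <= S'} ->
  disjoint_factors_on S' (drop n.+1 w) -> disjoint_factors_on S w.
Proof.
move=> fa sub [s [e [fS' disjS']]].
have inS' b : b \in S -> b != a -> b \in S' by move=> bS ba; apply: sub; rewrite inE ba.
exists (fun b => if b == a then i else n.+1 + s b),
       (fun b => if b == a then n else n.+1 + e b); split.
  move=> b bS; case: eqP => [-> // | /eqP ba].
  exact/good_factor_drop/fS'/inS'.
move=> b c bS cS bc; case: eqP => [ba|/eqP ba]; case: eqP => [ca|/eqP ca].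
- by move: bc; rewrite ba ca eqxx.
- by left; lia.
- by right; lia.
- by case: (disjS' b c (inS' b bS ba) (inS' c cS ca) bc); [left|right]; lia.
Qed.

Lemma first_repeat (T : eqType) (S : {pred T}) (w : seq T) :
  ~~ uniq [seq x <- w | x \in S] ->
  exists a i n, [/\ a \in S, good_factor w a i n & uniq [seq x <- take n w | x \in S]].
Proof.
move=> not_uniq.
have x0 : T by case: w not_uniq => [|x0 _] //.
pose P k := ~~ uniq [seq x <- take k w | x \in S].
have Psize : P (size w) by rewrite /P take_size.
case: (ex_minnP (ex_intro P _ Psize)) => -[|m]; first by rewrite /P take0.
move=> Pm minP; have mw : m < size w by apply: minP.
have uniq_m : uniq [seq x <- take m w | x \in S].
  by apply/negPn/negP => /minP; rewrite ltnn.
move: Pm; rewrite /P (take_nth x0 mw) filter_rcons.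
set a := nth x0 w m; case: ifP => [aS|_]; last by rewrite uniq_m.
rewrite rcons_uniq uniq_m andbT negbK mem_filter aS /= => a_before.
case/(nthP a): a_before => i; rewrite size_take mw => im ai.
exists a, i, m; split=> //; split=> //.
- by rewrite -(nth_take a im).
- exact: set_nth_default.
Qed.

Lemma count_mem_filter (T : eqType) (S : {pred T}) (s : seq T) (a : T) :
  a \in S -> count_mem a [seq x <- s | x \in S] = count_mem a s.
Proof.
by move=> aS; rewrite count_filter; apply: eq_count => x /=; case: eqP => // ->.
Qed.

Lemma disjoint_factors_on_count (T : finType) (S : {set T}) (w : seq T) :
  (forall a, a \in S -> #|S| < count_mem a w) -> disjoint_factors_on S w.
Proof.
move cardS: #|S| => k; elim: k S w cardS => [|k IH] S w cardS many.
  move/eqP: cardS; rewrite cards_eq0 => /eqP ->.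
  by exists (fun=> 0), (fun=> 0); split=> a; rewrite inE.
have [a0 a0S] : {a0 | a0 \in S}.
  by case: (set_0Vmem S) => [S0|//]; move: cardS; rewrite S0 cards0.
have not_uniq : ~~ uniq [seq x <- w | x \in S].
  apply/negP => /(count_uniq_mem a0); rewrite count_mem_filter //.
  by have := many a0 a0S; case: (_ \in _); lia.
have [a [i [n [aS fa uniq_n]]]] := first_repeat not_uniq.
apply: (disjoint_factors_on_factor_drop (S' := S :\ a) fa) => [b|].
  by rewrite !inE.
apply: IH => [|b]; first by move: cardS; rewrite (cardsD1 a) aS; lia.
rewrite !inE => /andP[ba bS].
have [_ nw _ wn] := fa.
have once_before : count_mem b (take n w) <= 1.
  by rewrite -(count_mem_filter _ bS) count_uniq_mem //; case: (_ \in _).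
have := many b bS; rewrite -{1}(cat_take_drop n w) count_cat (drop_nth a nw) wn /=.
by rewrite eq_sym (negbTE ba) add0n => /leq_trans/(_ (leq_add once_before (leqnn _))).
Qed.

Theorem lemma32 (T : finType) (w : seq T) :
  (forall a : T, #|T| < count_mem a w) -> disjoint_factors w.
Proof.
move=> many.
have [s [e [fs disj]]] : disjoint_factors_on [set: T] w.
  by apply: disjoint_factors_on_count => a _; rewrite cardsT.
by exists s, e; split=> [a|a b]; [apply: fs | apply: disj]; rewrite inE.
Qed.
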